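(* For every $\epsilon>0$, the operator $$\hat H(\epsilon):=-\partial_t^2+\frac{t^2}{2(1+\epsilon t^2)^{1/2}}-\frac{1}{\sqrt2\,(1+\epsilon t^2)^{1/4}}$$ on $L^2(\mathbb{R},dt)$ satisfies $\hat H(\epsilon)\ge-\frac{\epsilon}{4}$. Consequently, for every $u>0$ the operator $H_u:=-\partial_v^2+\frac{v^2}{2(u^2+v^2)^{1/2}}-\frac{1}{\sqrt2(u^2+v^2)^{1/4}}$ on $L^2(\mathbb{R},dv)$ satisfies $H_u\ge-\frac{1}{4u^2}$.
   Context: $\hat H(\epsilon)$ and $H_u$ are the self-adjoint operators defined by the closures of their quadratic forms on $C_0^\infty(\mathbb{R})$; inequalities are in the sense of quadratic forms. (Under $v=u^{1/4}t$ one has $H_u=u^{-1/2}\hat H(u^{-3/2})$.) *)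

From Stdlib Require Export Reals.
Open Scope R_scope.

Definition smooth (f : R -> R) : Prop :=
  exists fs : nat -> R -> R,
    fs 0%nat = f /\ forall (n : nat) (x : R), derivable_pt_lim (fs n) x (fs (S n) x).

Definition supported_in (f : R -> R) (a : R) : Prop :=
  forall x, a < Rabs x -> f x = 0.

Definition test_fun (f : R -> R) : Prop :=
  smooth f /\ exists a, supported_in f a.

Definition Vhat (eps t : R) : R :=
  t ^ 2 / (2 * sqrt (1 + eps * t ^ 2))
  - 1 / (sqrt 2 * sqrt (sqrt (1 + eps * t ^ 2))).

Definition Vu (u v : R) : R :=
  v ^ 2 / (2 * sqrt (u ^ 2 + v ^ 2))
  - 1 / (sqrt 2 * sqrt (sqrt (u ^ 2 + v ^ 2))).

(** Quadratic-form lower bound  -d^2 + V >= c  on C_0^infinity(R):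
    for every test function f with derivative f', supported in [-a,a],
    int_{-a}^{a} (f'^2 + V f^2) >= c * int_{-a}^{a} f^2. *)
Definition form_lower_bound (V : R -> R) (c : R) : Prop :=
  forall (f f' : R -> R), test_fun f ->
  (forall x, derivable_pt_lim f x (f' x)) ->
  forall (a : R), 0 < a -> supported_in f a ->
  forall (pr1 : Riemann_integrable (fun t => f' t ^ 2 + V t * f t ^ 2) (- a) a)
         (pr2 : Riemann_integrable (fun t => f t ^ 2) (- a) a),
  RiemannInt pr1 >= c * RiemannInt pr2.

From Stdlib Require Import Reals Lra Psatz FunctionalExtensionality.
From Coquelicot Require Import Coquelicot.
Open Scope R_scope.

(** Proof strategy: ground-state substitution (a Riccati factorisation).

    If W is C^1 with  V - W^2 - W' >= c  pointwise, then for a test function f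
    supported in [-a, a] the identity
        f'^2 + V f^2 = (f' - W f)^2 + (V - W^2 - W') f^2 + (W f^2)'
    integrates to  int (f'^2 + V f^2) >= c int f^2,  the boundary term
    [W f^2]_{-a}^{a} vanishing because f(-a) = f(a) = 0.  This is the general
    lemma [form_lower_bound_of_riccati].

    Both operators of the theorem belong to the family
        -d^2 + t^2 / (2 rho^{1/2}) - 1 / (sqrt 2 rho^{1/4}),  rho = a + b t^2,
    (a = 1, b = eps for H^(eps);  a = u^2, b = 1 for H_u).  For
        W = b t / (4 rho) - t / (sqrt 2 rho^{1/4})
    the residual is  V - W^2 - W' = (3 b^2 t^2 - 4 a b) / (16 rho^2) >= - b / (4 a),
    which gives the bounds  -eps/4  and  -1/(4 u^2). *)

Lemma continuous_zero_of_accumulating_zeros (f : R -> R) (x : R) :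
  continuity_pt f x ->
  (forall d, 0 < d -> exists y, Rabs (y - x) < d /\ y <> x /\ f y = 0) ->
  f x = 0.
Proof.
  intros Hc Hzeros.
  destruct (Req_dec (f x) 0) as [Hfx | Hfx]; [exact Hfx | exfalso].
  destruct (Hc (Rabs (f x)) (Rabs_pos_lt _ Hfx)) as [d [Hd Hclose]].
  destruct (Hzeros d Hd) as [y [Hyx [Hneq Hfy]]].
  assert (Habs : Rabs (f y - f x) < Rabs (f x))
    by (apply Hclose; repeat split; auto).
  rewrite Hfy, Rminus_0_l, Rabs_Ropp in Habs; lra.
Qed.

Lemma supported_vanishes_at_edges (f : R -> R) (a : R) :
  0 <= a -> (forall x, continuity_pt f x) -> supported_in f a ->
  f a = 0 /\ f (- a) = 0.
Proof.
  intros Ha Hf Hsupp; split; apply continuous_zero_of_accumulating_zeros; auto;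
    intros d Hd.
  - exists (a + d / 2); repeat split; try lra.
    + replace (a + d / 2 - a) with (d / 2) by ring; rewrite Rabs_pos_eq; lra.
    + apply Hsupp; rewrite Rabs_pos_eq; lra.
  - exists (- a - d / 2); repeat split; try lra.
    + replace (- a - d / 2 - - a) with (- (d / 2)) by ring.
      rewrite Rabs_Ropp, Rabs_pos_eq; lra.
    + apply Hsupp; rewrite Rabs_left; lra.
Qed.

Lemma test_fun_derivative_continuous (f f' : R -> R) :
  test_fun f -> (forall x, derivable_pt_lim f x (f' x)) ->
  forall x, continuity_pt f' x.
Proof.
  intros [[fs [Hf0 Hfs]] _] Hf' x.
  assert (Hf1 : f' = fs 1%nat).
  { apply functional_extensionality; intro y.
    apply (uniqueness_limite f y); [apply Hf' | rewrite <- Hf0; apply Hfs]. }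
  rewrite Hf1; apply derivable_continuous_pt; exact (exist _ _ (Hfs 1%nat x)).
Qed.

Lemma RiemannInt_of_derivative (Phi Phi' : R -> R) (lo hi : R) :
  (forall x, derivable_pt_lim Phi x (Phi' x)) -> (forall x, continuity_pt Phi' x) ->
  forall pr : Riemann_integrable Phi' lo hi, RiemannInt pr = Phi hi - Phi lo.
Proof.
  intros HPhi HPhi' pr.
  exact (@FTC_Riemann (@mkC1 Phi (fun x => exist _ (Phi' x) (HPhi x)) HPhi') lo hi pr).
Qed.

(** Pointwise completed square: if  c <= v - w^2 - w'  then
    (w y^2)' + c y^2 <= y'^2 + v y^2, the gap being
    (y' - w y)^2 + (v - w^2 - w' - c) y^2. *)
Lemma completed_square (v w w' c y y' : R) :
  c <= v - w ^ 2 - w' ->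
  w' * (y * y) + w * (y' * y + y * y') + c * y ^ 2 <= y' ^ 2 + v * y ^ 2.
Proof.
  intro Hc.
  assert (0 <= (v - w ^ 2 - w' - c) * y ^ 2) by (apply Rmult_le_pos; nra).
  assert (0 <= (y' - w * y) ^ 2) by apply pow2_ge_0.
  nra.
Qed.

Lemma form_lower_bound_of_riccati (V W W' : R -> R) (c : R) :
  (forall x, derivable_pt_lim W x (W' x)) ->
  (forall x, continuity_pt W' x) ->
  (forall x, c <= V x - W x ^ 2 - W' x) ->
  form_lower_bound V c.
Proof.
  intros HW HW' Hc f f' Htest Hf' a Ha Hsupp pr1 pr2.
  assert (Cf : forall x, continuity_pt f x)
    by (intro x; apply derivable_continuous_pt; exact (exist _ _ (Hf' x))).
  assert (Cf' := test_fun_derivative_continuous f f' Htest Hf').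
  assert (CW : forall x, continuity_pt W x)
    by (intro x; apply derivable_continuous_pt; exact (exist _ _ (HW x))).
  set (Phi := fun x => W x * (f x * f x)).
  set (Phi' := fun x => W' x * (f x * f x) + W x * (f' x * f x + f x * f' x)).
  assert (HPhi : forall x, derivable_pt_lim Phi x (Phi' x)).
  { intro x; apply (derivable_pt_lim_mult W (fun x => f x * f x)); [apply HW|].
    apply (derivable_pt_lim_mult f f); apply Hf'. }
  assert (CPhi' : forall x, continuity_pt Phi' x).
  { intro x; unfold Phi'.
    repeat first [apply continuity_pt_plus | apply continuity_pt_mult]; auto. }
  assert (prPhi : Riemann_integrable Phi' (- a) a)
    by (apply continuity_implies_RiemannInt; [lra | intros; apply CPhi']).
  assert (Hboundary : RiemannInt prPhi = 0).
  { rewrite (RiemannInt_of_derivative Phi Phi' _ _ HPhi CPhi').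
    destruct (supported_vanishes_at_edges f a (Rlt_le _ _ Ha) Cf Hsupp) as [Hfa Hfma].
    unfold Phi; rewrite Hfa, Hfma; ring. }
  (* int (Phi' + c f^2) = c int f^2, and the integrand lies below f'^2 + V f^2 *)
  set (pr3 := RiemannInt_P10 c prPhi pr2).
  assert (Hsplit := RiemannInt_P13 prPhi pr2 pr3).
  assert (Hmono : RiemannInt pr3 <= RiemannInt pr1).
  { apply RiemannInt_P19; [lra|]; intros x _; apply completed_square, Hc. }
  rewrite Hboundary, Rplus_0_l in Hsplit; lra.
Qed.

Section AnharmonicFamily.
Variables a b : R.
Hypotheses (a_pos : 0 < a) (b_pos : 0 < b).

Definition rho (t : R) : R := a + b * t ^ 2.

Definition potential (t : R) : R :=
  t ^ 2 / (2 * sqrt (rho t)) - 1 / (sqrt 2 * sqrt (sqrt (rho t))).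

Definition superpotential (t : R) : R :=
  b * t / (4 * rho t) - t / (sqrt 2 * sqrt (sqrt (rho t))).

Definition superpotential' (t : R) : R :=
  b * (a - b * t ^ 2) / (4 * rho t ^ 2)
  - (2 * a + b * t ^ 2) / (2 * sqrt 2 * sqrt (sqrt (rho t)) * rho t).

Lemma rho_pos (t : R) : 0 < rho t.
Proof. unfold rho; nra. Qed.

Lemma sqrt_rho_pos (t : R) : 0 < sqrt (rho t).
Proof. apply sqrt_lt_R0, rho_pos. Qed.

Lemma quartic_root_rho_pos (t : R) : 0 < sqrt (sqrt (rho t)).
Proof. apply sqrt_lt_R0, sqrt_rho_pos. Qed.

Lemma sqrt2_pos : 0 < sqrt 2.
Proof. apply sqrt_lt_R0; lra. Qed.

Lemma quartic_root_rho_sq (t : R) :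
  sqrt (rho t) = sqrt (sqrt (rho t)) * sqrt (sqrt (rho t)).
Proof. symmetry; apply sqrt_sqrt, Rlt_le, sqrt_rho_pos. Qed.

Lemma rho_quartic_root (t : R) :
  rho t = (sqrt (sqrt (rho t)) * sqrt (sqrt (rho t))) ^ 2.
Proof.
  rewrite <- quartic_root_rho_sq; simpl; rewrite Rmult_1_r.
  symmetry; apply sqrt_sqrt, Rlt_le, rho_pos.
Qed.

(** W' is the derivative of W.  Writing q = rho^{1/4} and eliminating
    a = q^4 - b t^2, the chain-rule expression and W' agree as rational
    functions of q, b, t and sqrt 2. *)
Lemma superpotential_derivative (t : R) :
  derivable_pt_lim superpotential t (superpotential' t).
Proof.
  assert (Hq := quartic_root_rho_pos t); assert (Hs := sqrt_rho_pos t).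
  assert (Hr := rho_pos t); assert (HK := sqrt2_pos).
  apply is_derive_Reals; unfold superpotential, superpotential', rho.
  auto_derive; change (t * (t * 1)) with (t ^ 2); fold (rho t).
  - repeat split; try apply Rgt_not_eq; repeat apply Rmult_lt_0_compat; lra.
  - set (q := sqrt (sqrt (rho t))) in *; set (K := sqrt 2) in *.
    assert (Hsq : sqrt (rho t) = q * q) by apply quartic_root_rho_sq.
    assert (Hrho : rho t = (q * q) ^ 2) by apply rho_quartic_root.
    rewrite Hsq; clearbody q K; rewrite Hrho; unfold rho in Hrho.
    replace a with ((q * q) ^ 2 - b * t ^ 2) by lra.
    field; lra.
Qed.

Lemma superpotential'_continuous (t : R) : continuity_pt superpotential' t.
Proof.
  assert (Hq := quartic_root_rho_pos t); assert (Hs := sqrt_rho_pos t).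
  assert (Hr := rho_pos t); assert (HK := sqrt2_pos).
  apply continuity_pt_filterlim, (ex_derive_continuous superpotential').
  unfold superpotential', rho; auto_derive; change (t * (t * 1)) with (t ^ 2);
    fold (rho t).
  repeat split; try apply Rgt_not_eq; repeat apply Rmult_lt_0_compat; lra.
Qed.

(** The Riccati residual  V - W^2 - W'  in closed form; the terms of order
    rho^{-1/4} and rho^{-1/2} cancel (the latter because sqrt 2 ^ 2 = 2). *)
Lemma riccati_residual (t : R) :
  potential t - superpotential t ^ 2 - superpotential' t
  = (3 * b ^ 2 * t ^ 2 - 4 * a * b) / (16 * rho t ^ 2).
Proof.
  assert (Hq := quartic_root_rho_pos t); assert (HK := sqrt2_pos).
  assert (HK2 : sqrt 2 * sqrt 2 = 2) by (apply sqrt_sqrt; lra).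
  unfold potential, superpotential, superpotential'.
  set (q := sqrt (sqrt (rho t))) in *; set (K := sqrt 2) in *.
  assert (Hsq : sqrt (rho t) = q * q) by apply quartic_root_rho_sq.
  assert (Hrho : rho t = (q * q) ^ 2) by apply rho_quartic_root.
  rewrite Hsq; clearbody q K.
  replace (t ^ 2 / (2 * (q * q))) with (t ^ 2 / (K * K * (q * q))) by now rewrite HK2.
  rewrite Hrho; unfold rho in Hrho.
  replace a with ((q * q) ^ 2 - b * t ^ 2) by lra.
  field; lra.
Qed.

(** The residual is bounded below by its value  -b/(4a)  at t = 0. *)
Lemma riccati_residual_lower_bound (t : R) :
  - (b / (4 * a)) <= potential t - superpotential t ^ 2 - superpotential' t.
Proof.
  assert (Hr := rho_pos t).
  rewrite riccati_residual.
  assert (Hgap : (3 * b ^ 2 * t ^ 2 - 4 * a * b) / (16 * rho t ^ 2) - - (b / (4 * a))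
                 = b * t ^ 2 * (11 * a * b + 4 * b ^ 2 * t ^ 2) / (16 * a * rho t ^ 2)).
  { unfold rho in *; field; split; lra. }
  assert (0 <= b * t ^ 2 * (11 * a * b + 4 * b ^ 2 * t ^ 2) / (16 * a * rho t ^ 2)).
  { assert (0 <= t ^ 2) by apply pow2_ge_0.
    apply Rmult_le_pos; [apply Rmult_le_pos; nra |].
    apply Rlt_le, Rinv_0_lt_compat, Rmult_lt_0_compat; [lra | apply pow_lt, Hr]. }
  lra.
Qed.

Lemma anharmonic_form_lower_bound : form_lower_bound potential (- (b / (4 * a))).
Proof.
  apply (form_lower_bound_of_riccati _ superpotential superpotential').
  - exact superpotential_derivative.
  - exact superpotential'_continuous.
  - exact riccati_residual_lower_bound.
Qed.
End AnharmonicFamily.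

Theorem proposition1 :
  (forall eps : R, 0 < eps -> form_lower_bound (Vhat eps) (- (eps / 4))) /\
  (forall u : R, 0 < u -> form_lower_bound (Vu u) (- (1 / (4 * u ^ 2)))).
Proof.
  split.
  -
    intros eps Heps.
    replace (- (eps / 4)) with (- (eps / (4 * 1))) by (f_equal; field).
    exact (anharmonic_form_lower_bound 1 eps Rlt_0_1 Heps).
  -
    intros u Hu.
    assert (HVu : Vu u = potential (u ^ 2) 1).
    { apply functional_extensionality; intro v.
      unfold Vu, potential, rho; rewrite Rmult_1_l; reflexivity. }
    rewrite HVu.
    exact (anharmonic_form_lower_bound (u ^ 2) 1 (pow_lt u 2 Hu) Rlt_0_1).
Qed.
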